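(* Fix $T\ge1$, $M>0$, $c>0$ and $\alpha$ with $\zeta(\alpha)\le 2$ ($\alpha\ge\zeta^{-1}(2)\approx1.7286$, $\zeta$ the Riemann zeta function). Let $E=\{0,1,\dots,\lfloor\log_2\sqrt{2T-1}\rfloor\}$. For each $i\in E$, expert $e_i$ runs OGP on $C$ with step $\eta_i=\frac{\rho}{\varrho\sqrt M}2^i$, subgradients $x_t^*(i)\in\partial\varphi_t(x_t(i))$ and arbitrary predictions $\widehat x_t^*(i)\in H$ with $\|\widehat x_t^*(i)\|\le\varrho$, producing $x_t(i)\in C$. A meta-learner runs ONES over $E$ with $\theta=c/\sqrt M$ and $\widetilde w_1(i)=\beta(i+2)^{-\alpha}$, $\beta^{-1}=\sum_{i\in E}(i+2)^{-\alpha}$, loss vectors $\ell_t(i)=\langle g_t,x_t(i)\rangle$ with $g_t\in\partial\varphi_t(\overline x_t)$, $\overline x_t=\sum_{i\in E}w_t(i)x_t(i)$, and arbitrary prediction vectors $\widehat\ell_t$; assume $\|\ell_t\|_\infty\le\rho\varrho$ and $\|\widehat\ell_t\|_\infty\le\rho\varrho$ for all $t$. Define $$Q_T(j)=4+\varrho^{-2}\sum_{t=1}^{T-1}\|x_t^*(j)-\widehat x_t^*(j)\|^2,\quad L_T=4+\rho^{-2}\varrho^{-2}\sum_{t=1}^{T-1}\|\ell_t-\widehat\ell_t\|_\infty^2,\quad M_T=\max\{L_T,\max_{j\in E}Q_T(j)\},$$ and suppose $M_T\le M$. Then there is a constant $K$ depending only on $\rho,\varrho,\alpha,c$ such that for every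 $z_1,\dots,z_T\in C$, with $P_T=\sum_{t=2}^T\|z_t-z_{t-1}\|$, $$\sum_{t=1}^T\varphi_t(\overline x_t)-\varphi_t(z_t)\le K\sqrt{(1+P_T)M}.$$
   Context: $H$ real Hilbert space; $C\subset H$ nonempty closed convex with diameter $\rho=\sup_{x,y\in C}\|x-y\|\in(0,\infty)$; losses $\varphi_t$ convex with $C\subset\operatorname{dom}\partial\varphi_t$ and $\|g\|\le\varrho<\infty$ for all $g\in\partial\varphi_t(x)$, $x\in C$. OGP with step $\eta$: $\widetilde{x}_{t+1}=P_C(\widetilde{x}_t-\eta x_t^* )$, $x_{t+1}=P_C(\widetilde{x}_{t+1}-\eta\widehat{x}_{t+1}^* )$, $\widetilde x_1\in C$, $P_C$ the metric projection. ONES with step $\theta$: $\widetilde w_{t+1}=\mathscr N(\widetilde w_t\circ e^{-\theta\ell_t})$, $w_{t}=\mathscr N(\widetilde w_{t}\circ e^{-\theta\widehat\ell_{t}})$, $\mathscr N(u)=u/\|u\|_1$, $\circ$ the Hadamard product. *)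

From HB Require Import structures.
From mathcomp Require Import all_boot all_order all_algebra.
From mathcomp Require Import all_classical all_reals all_analysis.
Set Implicit Arguments. Unset Strict Implicit. Unset Printing Implicit Defensive.
Import Order.TTheory GRing.Theory Num.Theory.
Local Open Scope ring_scope.

Section Defs.
Variable R : realType.

Definition inner_product (V : lmodType R) (ip : V -> V -> R) : Prop :=
  [/\ (forall x y, ip x y = ip y x),
      (forall (a : R) x y z, ip (a *: x + y) z = a * ip x z + ip y z),
      (forall x, 0 <= ip x x) &
      (forall x, ip x x = 0 -> x = 0)].

Definition ipnorm (V : lmodType R) (ip : V -> V -> R) (x : V) : R :=
  Num.sqrt (ip x x).

Definition ip_converges (V : lmodType R) (ip : V -> V -> R)
  (u : nat -> V) (l : V) : Prop :=
  forall e : R, 0 < e -> exists N, forall n, (N <= n)%N -> ipnorm ip (u n - l) < e.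

Definition ip_complete (V : lmodType R) (ip : V -> V -> R) : Prop :=
  forall u : nat -> V,
    (forall e : R, 0 < e -> exists N, forall m n, (N <= m)%N -> (N <= n)%N ->
        ipnorm ip (u m - u n) < e) ->
    exists l, ip_converges ip u l.

Definition hilbert (V : lmodType R) (ip : V -> V -> R) : Prop :=
  inner_product ip /\ ip_complete ip.

Definition closed_set (V : lmodType R) (ip : V -> V -> R) (C : set V) : Prop :=
  forall (u : nat -> V) (l : V), (forall n, C (u n)) -> ip_converges ip u l -> C l.

Definition is_convex_set (V : lmodType R) (C : set V) : Prop :=
  forall x y (l : R), C x -> C y -> 0 <= l <= 1 -> C (l *: x + (1 - l) *: y).

Definition is_diameter (V : lmodType R) (ip : V -> V -> R) (C : set V) (rho : R) : Prop :=
  (forall x y, C x -> C y -> ipnorm ip (x - y) <= rho) /\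
  (forall e : R, 0 < e -> exists x y, [/\ C x, C y & rho - e < ipnorm ip (x - y)]).

Definition is_proj (V : lmodType R) (ip : V -> V -> R) (C : set V) (x p : V) : Prop :=
  C p /\ (forall y, C y -> ipnorm ip (x - p) <= ipnorm ip (x - y)).

Definition proper_convex (V : lmodType R) (phi : V -> \bar R) : Prop :=
  (forall x, phi x != -oo%E) /\ (exists x, phi x \is a fin_num) /\
  (forall x y (l : R), 0 < l < 1 ->
     (phi (l *: x + (1 - l) *: y)%R <= l%:E * phi x + (1 - l)%:E * phi y)%E).

Definition subgrad (V : lmodType R) (ip : V -> V -> R) (phi : V -> \bar R) (x g : V) : Prop :=
  phi x \is a fin_num /\ forall y, (phi x + (ip g (y - x)%R)%:E <= phi y)%E.

Definition in_dom_subdiff (V : lmodType R) (ip : V -> V -> R) (phi : V -> \bar R) (x : V) : Prop :=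
  exists g, subgrad ip phi x g.

(** Riemann zeta on the real axis via its Dirichlet series, sum_{k>=1} k^{-a}
    (an extended real, +oo when a <= 1). *)
Definition zeta_series (a : R) : \bar R :=
  (\sum_(1 <= k <oo) ((k%:R : R) `^ (- a))%:E)%E.

(** largest index of the expert grid: floor(log_2 sqrt(2T - 1)) *)
Definition Emax (T : nat) : nat :=
  Num.truncn (ln (Num.sqrt ((2 * T - 1)%:R : R)) / ln 2).

Definition normalize (n : nat) (u : 'I_n -> R) : 'I_n -> R :=
  fun i => u i / \sum_(j < n) `|u j|.

Definition supnorm (n : nat) (u : 'I_n -> R) : R := \big[Num.max/0]_(i < n) `|u i|.

End Defs.

From HB Require Import structures.
From mathcomp Require Import all_boot all_order all_algebra.
From mathcomp Require Import all_classical all_reals all_analysis.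
From mathcomp Require Import ring lra zify.
Import Order.TTheory GRing.Theory Num.Theory.
Local Open Scope ring_scope.

(* Each expert runs optimistic projected gradient with a fixed step eta; telescoping
   the squared distances to the moving comparator bounds its dynamic regret by
   eta/2 * (squared prediction errors) + (rho^2 + 2 rho P) / (2 eta).  The best step
   is proportional to s = sqrt (1 + 2 P / rho), and since P <= rho (T - 1) the grid
   2^j, j in E, contains a step within a factor 2 of it.  Against that expert j the
   meta-learner, optimistic exponential weights on the linearised losses, pays
   -ln w_1(j) / theta plus theta times the squared loss-prediction errors; because
   zeta(alpha) <= 2 the prior (j + 2)^-alpha has total mass at most 1, so
   -ln w_1(j) = O(2^j) = O(s).  Convexity splits the regret of the mixture into these
   two parts, each O(s sqrt M), and s sqrt M <= sqrt ((1 + 2 / rho) (1 + P) M). *)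

Set Implicit Arguments.
Unset Strict Implicit.

Section InnerProduct.
Variables (R : realType) (V : lmodType R) (ip : V -> V -> R).
Hypothesis ip_inner : inner_product ip.

Lemma ipC x y : ip x y = ip y x.
Proof. by case: ip_inner. Qed.

Lemma ipDl x y z : ip (x + y) z = ip x z + ip y z.
Proof. by case: ip_inner => _ /(_ 1 x y z); rewrite scale1r mul1r. Qed.

Lemma ip0l z : ip 0 z = 0.
Proof. by have := ipDl 0 0 z; rewrite addr0; lra. Qed.

Lemma ipZl a x z : ip (a *: x) z = a * ip x z.
Proof. by case: ip_inner => _ /(_ a x 0 z); rewrite !addr0 ip0l addr0. Qed.

Lemma ipNl x z : ip (- x) z = - ip x z.
Proof. by rewrite -scaleN1r ipZl mulN1r. Qed.

Lemma ipDr x y z : ip z (x + y) = ip z x + ip z y.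
Proof. by rewrite ipC ipDl !(ipC z). Qed.

Lemma ipZr a x z : ip z (a *: x) = a * ip z x.
Proof. by rewrite ipC ipZl ipC. Qed.

Lemma ipNr x z : ip z (- x) = - ip z x.
Proof. by rewrite ipC ipNl ipC. Qed.

Lemma ip0r z : ip z 0 = 0.
Proof. by rewrite ipC ip0l. Qed.

Lemma ip_sumr I (r : seq I) (P : pred I) (F : I -> V) z :
  ip z (\sum_(i <- r | P i) F i) = \sum_(i <- r | P i) ip z (F i).
Proof. by elim/big_rec2: _ => [|i y1 y2 _ <-]; rewrite ?ip0r ?ipDr. Qed.

Lemma ip_ge0 x : 0 <= ip x x.
Proof. by case: ip_inner. Qed.

Lemma ip_eq0 x : ip x x = 0 -> x = 0.
Proof. by case: ip_inner => _ _ _; apply. Qed.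

Lemma ipnorm_ge0 x : 0 <= ipnorm ip x.
Proof. exact: sqrtr_ge0. Qed.

Lemma sqr_ipnorm x : ipnorm ip x ^+ 2 = ip x x.
Proof. by rewrite /ipnorm sqr_sqrtr // ip_ge0. Qed.

Lemma ipnormN x : ipnorm ip (- x) = ipnorm ip x.
Proof. by rewrite /ipnorm ipNl ipNr opprK. Qed.

Lemma ipnorm_distC x y : ipnorm ip (x - y) = ipnorm ip (y - x).
Proof. by rewrite -ipnormN opprB. Qed.

Lemma ip_le_normM x y : ip x y <= ipnorm ip x * ipnorm ip y.
Proof.
have [y0|y_neq0] := eqVneq (ip y y) 0.
  by rewrite (ip_eq0 y0) ip0r mulr_ge0 // ipnorm_ge0.
have y_gt0 : 0 < ip y y by rewrite lt_def y_neq0 ip_ge0.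
(* expand [0 <= <x - t y, x - t y>] at the minimiser [t = <x,y>/<y,y>] *)
have sqr_le : ip x y ^+ 2 <= ip x x * ip y y.
  have := ip_ge0 (x - (ip x y / ip y y) *: y).
  rewrite !(ipDl, ipDr, ipNl, ipNr, ipZl, ipZr) (ipC y x) divfK // => h.
  have : 0 <= (ip x x - ip x y / ip y y * ip x y) * ip y y.
    by rewrite mulr_ge0 ?ip_ge0 //; lra.
  suff -> : (ip x x - ip x y / ip y y * ip x y) * ip y y =
    ip x x * ip y y - ip x y ^+ 2 by lra.
  by field; rewrite y_neq0.
rewrite /ipnorm -sqrtrM ?ip_ge0 //; apply: le_trans (ler_norm _) _.
by rewrite -sqrtr_sqr ler_sqrt ?mulr_ge0 ?ip_ge0.
Qed.

Lemma ipnormD_le x y : ipnorm ip (x + y) <= ipnorm ip x + ipnorm ip y.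
Proof.
have h := ip_le_normM x y.
rewrite {1}/ipnorm -(@ger0_norm _ (_ + _)) ?addr_ge0 ?ipnorm_ge0 //.
rewrite -sqrtr_sqr ler_sqrt ?sqr_ge0 // !(ipDl, ipDr) sqrrD !sqr_ipnorm (ipC y x).
lra.
Qed.

End InnerProduct.

Section PredictionBudget.
Variable R : realType.

Lemma budget_ge4 (d : nat -> R) (b M : R) T :
  4 + b ^- 2 * \sum_(1 <= t < T) d t ^+ 2 <= M -> 4 <= M.
Proof.
move=> /(le_trans _); apply; rewrite lerDl mulr_ge0 ?invr_ge0 ?sqr_ge0 //.
by apply: sumr_ge0 => t _; exact: sqr_ge0.
Qed.

(* The "+ 4" in the budget pays for the last round, which is not in the sum. *)
Lemma sum_sqr_le_budget (d : nat -> R) (b M : R) T : 0 < b -> (1 <= T)%N ->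
  `|d T| <= 2 * b -> 4 + b ^- 2 * \sum_(1 <= t < T) d t ^+ 2 <= M ->
  \sum_(1 <= t < T.+1) d t ^+ 2 <= b ^+ 2 * M.
Proof.
move=> b_gt0 T_ge1 dT_le budget; rewrite big_nat_recr //=.
have b2_gt0 : 0 < b ^+ 2 by rewrite exprn_gt0.
have : d T ^+ 2 <= 4 * b ^+ 2.
  by rewrite -(real_normK (num_real (d T))); have := normr_ge0 (d T); nra.
move: budget; rewrite -(ler_pM2l b2_gt0) mulrDr mulrA divff ?gt_eqF // mul1r; lra.
Qed.

End PredictionBudget.

Section ProjectedGradient.
Variables (R : realType) (V : lmodType R) (ip : V -> V -> R) (C : set V).
Hypotheses (ip_inner : inner_product ip) (C_convex : is_convex_set C).

Ltac ip_expand := rewrite ?(ipDl ip_inner, ipDr ip_inner, ipNl ip_inner,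
  ipNr ip_inner, ipZl ip_inner, ipZr ip_inner).

Lemma is_proj_ip_le0 x p y : is_proj ip C x p -> C y -> ip (x - p) (y - p) <= 0.
Proof.
move=> [Cp p_min] Cy; rewrite leNgt; apply/negP => a_gt0.
set a := ip (x - p) (y - p) in a_gt0 *.
set N := ip (y - p) (y - p).
have N_ge0 : 0 <= N by apply: ip_ge0.
(* moving from p towards y by lam = a/(a+N) strictly decreases the distance to x *)
set lam := a / (a + N).
have aN : 0 < a + N by lra.
have lam_gt0 : 0 < lam by rewrite divr_gt0.
have lam_le1 : lam <= 1 by rewrite ler_pdivrMr // mul1r; lra.
have := p_min _ (C_convex Cy Cp (introT andP (conj (ltW lam_gt0) lam_le1))).
rewrite /ipnorm ler_sqrt ?ip_ge0 // => h.
have h2 : 2 * lam * a <= lam ^+ 2 * N.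
  move: h; rewrite /a /N; ip_expand.
  have s1 := ipC ip_inner x y; have s2 := ipC ip_inner x p.
  have s3 := ipC ip_inner y p; clearbody lam; nra.
have h3 : lam * N <= a by rewrite /lam mulrAC ler_pdivrMr //; nra.
nra.
Qed.

(* One round of optimistic projected gradient: X is the played point, built
   from the prediction h, and Xt' the next auxiliary point, built from g. *)
Lemma ogp_step_regret (eta : R) Xt Xt' X g h z : 0 < eta -> C z ->
  is_proj ip C (Xt - eta *: h) X -> is_proj ip C (Xt - eta *: g) Xt' ->
  eta * ip g (X - z) <= eta ^+ 2 / 2 * ip (g - h) (g - h)
     + (ip (Xt - z) (Xt - z) - ip (Xt' - z) (Xt' - z)) / 2.
Proof.
move=> eta_gt0 Cz pX pXt'.
have := is_proj_ip_le0 pXt' Cz.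
have := is_proj_ip_le0 pX (proj1 pXt').
have := ip_ge0 ip_inner (eta *: (g - h) - (X - Xt')).
have := ip_ge0 ip_inner (Xt - X).
ip_expand; move: (ipC ip_inner) => s.
move: (s Xt Xt') (s Xt X) (s Xt g) (s Xt h) (s Xt z) (s Xt' X) (s Xt' g) (s Xt' h)
  (s Xt' z) (s X g) (s X h) (s X z) (s g h) (s g z) (s h z); clear s.
nra.
Qed.

Variable rho : R.
Hypothesis C_diam : forall u v, C u -> C v -> ipnorm ip (u - v) <= rho.

Lemma ip_dist_shift a z z' : C a -> C z -> C z' ->
  ip (a - z') (a - z') <= ip (a - z) (a - z) + 2 * rho * ipnorm ip (z' - z).
Proof.
move=> Ca Cz Cz'; rewrite -!(sqr_ipnorm ip_inner).
have := C_diam Ca Cz; have := C_diam Ca Cz'.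
have : ipnorm ip (a - z') <= ipnorm ip (a - z) + ipnorm ip (z' - z).
  rewrite (ipnorm_distC ip_inner z'); apply: le_trans (ipnormD_le ip_inner _ _).
  by rewrite addrA subrK.
have := ipnorm_ge0 ip (a - z); have := ipnorm_ge0 ip (a - z').
have := ipnorm_ge0 ip (z' - z); nra.
Qed.

Lemma ogp_dynamic_regret (eta : R) T (Xt X gs hs z : nat -> V) :
  0 < eta -> (1 <= T)%N ->
  (forall t, (1 <= t)%N -> is_proj ip C (Xt t - eta *: hs t) (X t)) ->
  (forall t, (1 <= t)%N -> is_proj ip C (Xt t - eta *: gs t) (Xt t.+1)) ->
  C (Xt 1%N) -> (forall t, (1 <= t <= T)%N -> C (z t)) ->
  eta * \sum_(1 <= t < T.+1) ip (gs t) (X t - z t) <=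
  eta ^+ 2 / 2 * \sum_(1 <= t < T.+1) ip (gs t - hs t) (gs t - hs t)
  + (rho ^+ 2 + 2 * rho * \sum_(1 <= t < T) ipnorm ip (z t.+1 - z t)) / 2.
Proof.
move=> eta_gt0 T1 pX pXt C1 Cz.
suff telescope k : (k.+1 <= T)%N ->
  eta * \sum_(1 <= t < k.+2) ip (gs t) (X t - z t) <=
  eta ^+ 2 / 2 * \sum_(1 <= t < k.+2) ip (gs t - hs t) (gs t - hs t)
  + (rho ^+ 2 - ip (Xt k.+2 - z k.+1) (Xt k.+2 - z k.+1)
     + 2 * rho * \sum_(1 <= t < k.+1) ipnorm ip (z t.+1 - z t)) / 2.
  case: T T1 Cz telescope => // T _ _ /(_ T (leqnn _)) h.
  by apply: le_trans h _; have := ip_ge0 ip_inner (Xt T.+2 - z T.+1); lra.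
elim: k => [kT|k IH kT].
  rewrite !big_nat1 big_geq //.
  have Cz1 : C (z 1%N) by apply: Cz; rewrite kT.
  have := ogp_step_regret eta_gt0 Cz1 (pX 1%N isT) (pXt 1%N isT).
  have := C_diam C1 Cz1.
  rewrite -[ip (Xt 1%N - z 1%N) _](sqr_ipnorm ip_inner).
  have := ipnorm_ge0 ip (Xt 1%N - z 1%N); nra.
have := IH (ltnW kT).
rewrite (big_nat_recr k.+2 1 (fun t => ip (gs t) (X t - z t))) //.
rewrite (big_nat_recr k.+2 1 (fun t => ip (gs t - hs t) (gs t - hs t))) //.
rewrite (big_nat_recr k.+1 1 (fun t => ipnorm ip (z t.+1 - z t))) //=.
have Czk1 : C (z k.+2) by apply: Cz; lia.
have Czk : C (z k.+1) by apply: Cz; lia.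
have := ogp_step_regret eta_gt0 Czk1 (pX k.+2 isT) (pXt k.+2 isT).
have := ip_dist_shift (proj1 (pXt k.+1 isT)) Czk Czk1.
lra.
Qed.

Lemma path_length_le T (z : nat -> V) : (forall t, (1 <= t <= T)%N -> C (z t)) ->
  \sum_(2 <= t < T.+1) ipnorm ip (z t - z t.-1) <= rho * (T.-1)%:R.
Proof.
move=> zC; apply: le_trans (_ : \sum_(2 <= t < T.+1) rho <= _).
  apply: ler_sum_nat => t /andP[t2 tT].
  by apply: C_diam; apply: zC; case: t t2 tT => [|[|t]] //=; lia.
by rewrite sumr_const_nat mulr_natr subSS subn1.
Qed.

Lemma ogp_tuned_regret (vrho M p : R) T (Xt X gs hs z : nat -> V) :
  0 < rho -> 0 < vrho -> 0 < p -> (1 <= T)%N ->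
  let eta := rho / (vrho * Num.sqrt M) * p in
  (forall t, (1 <= t)%N -> is_proj ip C (Xt t - eta *: hs t) (X t)) ->
  (forall t, (1 <= t)%N -> is_proj ip C (Xt t - eta *: gs t) (Xt t.+1)) ->
  C (Xt 1%N) -> (forall t, (1 <= t <= T)%N -> C (z t)) ->
  ipnorm ip (gs T) <= vrho -> ipnorm ip (hs T) <= vrho ->
  4 + vrho ^- 2 * \sum_(1 <= t < T) ipnorm ip (gs t - hs t) ^+ 2 <= M ->
  \sum_(1 <= t < T.+1) ip (gs t) (X t - z t) <= rho * vrho * Num.sqrt M / 2 *
    (p + (1 + 2 * (\sum_(2 <= t < T.+1) ipnorm ip (z t - z t.-1)) / rho) / p).
Proof.
move=> rho_gt0 vrho_gt0 p_gt0 T_ge1 eta play_proj next_proj C1 zC gsT_le hsT_le budget.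
have M_ge4 := budget_ge4 budget.
set sM := Num.sqrt M.
have sM_gt0 : 0 < sM by rewrite sqrtr_gt0; lra.
have sM2 : sM ^+ 2 = M by rewrite sqr_sqrtr //; lra.
have eta_gt0 : 0 < eta by rewrite /eta -/sM mulr_gt0 // divr_gt0 // mulr_gt0.
have err_le : \sum_(1 <= t < T.+1) ip (gs t - hs t) (gs t - hs t) <= vrho ^+ 2 * M.
  under eq_bigr do rewrite -(sqr_ipnorm ip_inner).
  apply: sum_sqr_le_budget => //; rewrite ger0_norm ?ipnorm_ge0 //.
  by apply: le_trans (ipnormD_le ip_inner _ _) _; rewrite (ipnormN ip_inner); lra.
have regret := ogp_dynamic_regret eta_gt0 T_ge1 play_proj next_proj C1 zC.
rewrite -(ler_pM2l eta_gt0); apply: le_trans regret _.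
rewrite [\sum_(2 <= t < T.+1) _]big_add1 /=; set P := \sum_(1 <= t < T) _.
have -> : eta * (rho * vrho * sM / 2 * (p + (1 + 2 * P / rho) / p)) =
    eta ^+ 2 / 2 * (vrho ^+ 2 * M) + (rho ^+ 2 + 2 * rho * P) / 2.
  by rewrite /eta -/sM -sM2; field; rewrite !gt_eqF.
by rewrite lerD2r ler_wpM2l // divr_ge0 ?sqr_ge0.
Qed.

End ProjectedGradient.

Section Subgradient.
Variables (R : realType) (V : lmodType R) (ip : V -> V -> R).
Hypothesis ip_inner : inner_product ip.

Lemma subgrad_fine_le (phi : V -> \bar R) x g y :
  subgrad ip phi x g -> phi y \is a fin_num -> fine (phi x) + ip g (y - x) <= fine (phi y).
Proof.
move=> [fx phi_ge] fy; move: (phi_ge y).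
by rewrite -{1}(fineK fx) -(fineK fy) -EFinD lee_fin.
Qed.

Lemma mixture_regret_split n (phi : V -> \bar R) (w : 'I_n -> R) (x : 'I_n -> V)
    (j : 'I_n) g s z :
  subgrad ip phi (\sum_i w i *: x i) g -> subgrad ip phi (x j) s -> phi z \is a fin_num ->
  fine (phi (\sum_i w i *: x i)) - fine (phi z)
    <= (\sum_i w i * ip g (x i) - ip g (x j)) + ip s (x j - z).
Proof.
move=> g_sub s_sub fz.
have := subgrad_fine_le g_sub s_sub.1; have := subgrad_fine_le s_sub fz.
have -> : ip g (x j - \sum_i w i *: x i) = ip g (x j) - \sum_i w i * ip g (x i).
  rewrite (ipDr ip_inner) (ipNr ip_inner) ip_sumr //.
  by under eq_bigr do rewrite (ipZr ip_inner).
rewrite -[z - x j]opprB (ipNr ip_inner); lra.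
Qed.

End Subgradient.

Section ExponentialWeights.
Variable R : realType.

Lemma expR_le1Dx_sqr (x : R) : expR x <= 1 + x + x ^+ 2 * expR `|x|.
Proof.
have ex_gt0 := expR_gt0 x; have := expR_ge1Dx x.
have : expR x <= 1 + x * expR x.
  have := expR_ge1Dx (- x); have := expRxMexpNx_1 x; nra.
have [x_ge0|x_lt0] := leP 0 x; first by rewrite ger0_norm //; nra.
rewrite ltr0_norm //; have := expR_ge1Dx (- x); nra.
Qed.

Lemma ln_le_subr1 (x : R) : 0 < x -> ln x <= x - 1.
Proof.
by move=> x_gt0; have := @le_ln1Dx R (x - 1); rewrite addrCA subrr addr0; apply; lra.
Qed.

Lemma psumr_gt0 n (u : 'I_n.+1 -> R) : (forall i, 0 < u i) -> 0 < \sum_i u i.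
Proof.
move=> u_gt0; rewrite (bigD1 ord0) //= ltr_pwDl //.
by apply: sumr_ge0 => i _; exact: ltW.
Qed.

Section Normalize.
Variables (n : nat) (u : 'I_n.+1 -> R).
Hypothesis u_gt0 : forall i, 0 < u i.

Lemma normalize_pos i : normalize u i = u i / \sum_j u j.
Proof. by rewrite /normalize; congr (_ / _); apply: eq_bigr => j _; rewrite gtr0_norm. Qed.

Lemma normalize_gt0 i : 0 < normalize u i.
Proof. by rewrite normalize_pos divr_gt0 ?psumr_gt0. Qed.

Lemma sum_normalize : \sum_i normalize u i = 1.
Proof.
under eq_bigr do rewrite normalize_pos.
by rewrite -mulr_suml divff // gt_eqF ?psumr_gt0.
Qed.

End Normalize.

Lemma ones_step n (wt a b : 'I_n.+1 -> R) (th D : R) : 0 < th ->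
  (forall i, 0 < wt i) -> \sum_i wt i = 1 -> (forall i, `|a i - b i| <= D) ->
  th * (\sum_i normalize (fun i => wt i * expR (- th * b i)) i * a i)
    - th ^+ 2 * D ^+ 2 * expR (th * D)
  <= - ln (\sum_i wt i * expR (- th * a i)).
Proof.
move=> th_gt0 wt_gt0 wt_sum1 abD.
set u := fun i => wt i * expR (- th * b i).
have u_gt0 i : 0 < u i by rewrite mulr_gt0 // expR_gt0.
have Z_gt0 := psumr_gt0 u_gt0; set Z := \sum_i u i in Z_gt0.
set w := normalize u.
have wE i : w i = u i / Z := normalize_pos u_gt0 i.
have w_gt0 i : 0 < w i := normalize_gt0 u_gt0 i.
have w_sum1 : \sum_i w i = 1 := sum_normalize u_gt0.
have D_ge0 : 0 <= D by apply: le_trans (abD ord0).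
set U := \sum_i w i * expR (- th * (a i - b i)).
have U_gt0 : 0 < U by apply: psumr_gt0 => i; rewrite mulr_gt0 // expR_gt0.
have -> : \sum_i wt i * expR (- th * a i) = Z * U.
  rewrite /U mulr_sumr; apply: eq_bigr => i _; rewrite wE /u.
  rewrite [in LHS](_ : - th * a i = - th * b i + - th * (a i - b i)) ?expRD; last by ring.
  by field; rewrite gt_eqF.
rewrite lnM ?posrE //.
(* Gibbs' inequality sum_i w_i ln (wt_i / w_i) <= 0, where wt_i / w_i = Z e^{th b_i} *)
have lnZ : ln Z + th * \sum_i w i * b i <= 0.
  have : \sum_i w i * (ln Z + th * b i) <= \sum_i (wt i - w i).
    apply: ler_sum => i _.
    have -> : ln Z + th * b i = ln (Z * expR (th * b i)).
      by rewrite lnM ?posrE ?expR_gt0 // expRK.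
    have e : w i * (Z * expR (th * b i)) = wt i.
      by rewrite wE /u mulNr expRN; field; rewrite ?expR_eq0 gt_eqF.
    have := ln_le_subr1 (mulr_gt0 Z_gt0 (expR_gt0 (th * b i))).
    have := w_gt0 i; nra.
  rewrite sumrB w_sum1 wt_sum1 subrr.
  under eq_bigr do rewrite mulrDr.
  rewrite big_split /= -mulr_suml w_sum1 mul1r mulr_sumr.
  by under [X in _ + X]eq_bigr do rewrite mulrCA.
have lnU : ln U <= - th * \sum_i w i * (a i - b i) + th ^+ 2 * D ^+ 2 * expR (th * D).
  apply: le_trans (ln_le_subr1 U_gt0) _.
  have : \sum_i w i * (expR (- th * (a i - b i)) - 1)
       <= \sum_i w i * (- th * (a i - b i) + th ^+ 2 * D ^+ 2 * expR (th * D)).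
    apply: ler_sum => i _; apply: ler_wpM2l; first exact: ltW.
    set y := - th * (a i - b i).
    have y_le : `|y| <= th * D by rewrite normrM normrN (gtr0_norm th_gt0) ler_pM2l.
    have y2_le : y ^+ 2 <= th ^+ 2 * D ^+ 2.
      by rewrite -(real_normK (num_real y)); have := normr_ge0 y; nra.
    have := expR_le1Dx_sqr y; have : expR `|y| <= expR (th * D) by rewrite ler_expR.
    have := expR_gt0 `|y|; have := sqr_ge0 y; nra.
  under eq_bigr do rewrite mulrBr mulr1.
  rewrite sumrB w_sum1; under [X in _ <= X -> _]eq_bigr do rewrite mulrDr.
  rewrite big_split /= -mulr_suml w_sum1 mul1r mulr_sumr.
  by under [X in _ <= X + _ -> _]eq_bigr do rewrite mulrCA.
have : \sum_i w i * a i = \sum_i w i * b i + \sum_i w i * (a i - b i).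
  by rewrite -big_split; apply: eq_bigr => i _ /=; ring.
move=> ->; lra.
Qed.

Lemma ones_regret n (wt w l lh : nat -> 'I_n.+1 -> R) (th : R) (D : nat -> R) T j :
  0 < th -> (forall i, 0 < wt 1%N i) -> \sum_i wt 1%N i = 1 ->
  (forall t, (1 <= t)%N -> wt t.+1 = normalize (fun i => wt t i * expR (- th * l t i))) ->
  (forall t, (1 <= t)%N -> w t = normalize (fun i => wt t i * expR (- th * lh t i))) ->
  (forall t i, (1 <= t)%N -> `|l t i - lh t i| <= D t) ->
  th * \sum_(1 <= t < T.+1) (\sum_i w t i * l t i - l t j)
   <= - ln (wt 1%N j) + th ^+ 2 * \sum_(1 <= t < T.+1) D t ^+ 2 * expR (th * D t).
Proof.
move=> th_gt0 w1_gt0 w1_sum1 wt_next w_play lD.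
have wt_simplex t : (1 <= t)%N -> (forall i, 0 < wt t i) /\ \sum_i wt t i = 1.
  elim: t => // -[_ _|t IH _]; first by [].
  have u_gt0 i := mulr_gt0 ((IH isT).1 i) (expR_gt0 (- th * l t.+1 i)).
  by rewrite wt_next //; split; [exact: normalize_gt0|exact: sum_normalize].
have step t : (1 <= t)%N ->
    th * (\sum_i w t i * l t i - l t j) - th ^+ 2 * D t ^+ 2 * expR (th * D t)
    <= ln (wt t.+1 j) - ln (wt t j).
  move=> t1; have [wt_gt0 wt_sum1] := wt_simplex t t1.
  have := ones_step th_gt0 wt_gt0 wt_sum1 (fun i => lD t i t1).
  have u_gt0 i := mulr_gt0 (wt_gt0 i) (expR_gt0 (- th * l t i)).
  have S_gt0 := psumr_gt0 u_gt0.
  rewrite -w_play // wt_next // normalize_pos // ln_div ?posrE ?u_gt0 //.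
  rewrite lnM ?posrE ?wt_gt0 ?expR_gt0 //.
  rewrite expRK mulrBr mulr_sumr; lra.
have : ln (wt T.+1 j) <= 0.
  have [wt_pos wt_sum1] := wt_simplex T.+1 isT.
  apply: ln_le0; rewrite -wt_sum1.
  by rewrite (bigD1 j) //= lerDl; apply: sumr_ge0 => i _; exact: ltW.
suff : th * \sum_(1 <= t < T.+1) (\sum_i w t i * l t i - l t j) <= ln (wt T.+1 j)
    - ln (wt 1%N j) + th ^+ 2 * \sum_(1 <= t < T.+1) D t ^+ 2 * expR (th * D t) by lra.
elim: T => [|T IH]; first by rewrite !big_geq // !mulr0 addr0 subrr.
by rewrite !(big_nat_recr T.+1 1) //=; have := step T.+1 isT; lra.
Qed.

Lemma sum_prior_le1 (alpha : R) n : (zeta_series alpha <= 2%:E)%E ->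
  \sum_(i < n) (i.+2)%:R `^ (- alpha) <= 1.
Proof.
move=> zeta_le2.
have := @nneseries_lim_ge R (fun k => ((k%:R : R) `^ (- alpha))%:E) xpredT 1%N n.+2.
move=> /(_ (fun k _ _ => powR_ge0 _ _))/le_trans/(_ zeta_le2).
rewrite sumEFin lee_fin big_ltn // powR1 -{1}(add0n 2%N) big_addn.
rewrite (_ : (n.+2 - 2 = n)%N); last by lia.
rewrite big_mkord; under eq_bigr do rewrite addn2; lra.
Qed.

Lemma ln_prior_le (alpha : R) n (j : 'I_n.+1) : (zeta_series alpha <= 2%:E)%E ->
  - ln ((j.+2)%:R `^ (- alpha) / \sum_(i < n.+1) (i.+2)%:R `^ (- alpha))
    <= `|alpha| * 2 ^+ j.
Proof.
move=> zeta_le2.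
have S_gt0 : 0 < \sum_(i < n.+1) ((i.+2)%:R : R) `^ (- alpha).
  by apply: psumr_gt0 => i; rewrite powR_gt0 ?ltr0n.
rewrite ln_div ?posrE ?powR_gt0 ?ltr0n // ln_powR.
have := ln_le0 (sum_prior_le1 n.+1 zeta_le2).
have ln_ge0 : 0 <= ln ((j.+2)%:R : R) by rewrite ln_ge0 // ler1n.
have : ln ((j.+2)%:R : R) <= 2 ^+ j.
  apply: le_trans (ln_le_subr1 _) _; first by rewrite ltr0n.
  by rewrite -natr1 addrK -natrX ler_nat ltn_expl.
have := ler_norm alpha; have := normr_ge0 alpha; nra.
Qed.

Lemma ler_supnorm n (u : 'I_n -> R) i : `|u i| <= supnorm u.
Proof. exact: (le_bigmax _ (fun i => `|u i|)). Qed.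

Lemma supnormB_le n (u v : 'I_n -> R) :
  supnorm (fun i => u i - v i) <= supnorm u + supnorm v.
Proof.
apply: bigmax_le => [|i _]; first by rewrite addr_ge0 // bigmax_ge_id.
by apply: le_trans (ler_normB _ _) _; rewrite lerD ?ler_supnorm.
Qed.

Lemma ones_tuned_regret n (wt w l lh : nat -> 'I_n.+1 -> R) (alpha c a M : R) T
    (j : 'I_n.+1) :
  (zeta_series alpha <= 2%:E)%E -> 0 < c -> 0 < a -> (1 <= T)%N ->
  let theta := c / Num.sqrt M in
  (forall i, wt 1%N i = (i.+2)%:R `^ (- alpha) / \sum_(k < n.+1) (k.+2)%:R `^ (- alpha)) ->
  (forall t, (1 <= t)%N -> wt t.+1 = normalize (fun i => wt t i * expR (- theta * l t i))) ->
  (forall t, (1 <= t)%N -> w t = normalize (fun i => wt t i * expR (- theta * lh t i))) ->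
  (forall t, (1 <= t)%N -> supnorm (l t) <= a) ->
  (forall t, (1 <= t)%N -> supnorm (lh t) <= a) ->
  4 + a ^- 2 * \sum_(1 <= t < T) supnorm (fun i => l t i - lh t i) ^+ 2 <= M ->
  \sum_(1 <= t < T.+1) (\sum_i w t i * l t i - l t j)
    <= Num.sqrt M * (`|alpha| / c * 2 ^+ j + c * expR (c * a) * a ^+ 2).
Proof.
move=> zeta_le2 c_gt0 a_gt0 T_ge1 theta wt1 wt_next w_play l_le lh_le budget.
set D := fun t => supnorm (fun i => l t i - lh t i).
have D_ge0 t : 0 <= D t by apply: le_trans (ler_supnorm _ ord0).
have D_le t : (1 <= t)%N -> D t <= 2 * a.
  move=> t1; apply: le_trans (supnormB_le _ _) _.
  by have := l_le t t1; have := lh_le t t1; lra.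
have M_ge4 := budget_ge4 budget.
set sM := Num.sqrt M.
have sM2 : sM ^+ 2 = M by rewrite sqr_sqrtr //; lra.
have sM_ge2 : 2 <= sM by have := sqrtr_ge0 M; rewrite -/sM; nra.
have theta_gt0 : 0 < theta by rewrite /theta -/sM divr_gt0 //; lra.
have prior_gt0 (i : 'I_n.+1) : 0 < (i.+2)%:R `^ (- alpha) by rewrite powR_gt0 ?ltr0n.
have wt1_gt0 i : 0 < wt 1%N i by rewrite wt1 divr_gt0 ?psumr_gt0.
have wt1_sum1 : \sum_i wt 1%N i = 1.
  by under eq_bigr do rewrite wt1; rewrite -mulr_suml divff // gt_eqF ?psumr_gt0.
have := @ones_regret n wt w l lh theta D T j theta_gt0 wt1_gt0 wt1_sum1 wt_next w_play
  (fun t i _ => ler_supnorm (fun i => l t i - lh t i) i).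
rewrite wt1 => /le_trans/(_ (lerD (ln_prior_le j zeta_le2) (lexx _))).
(* each step's exponent theta D_t is at most c a because sqrt M >= 2 *)
have second_order : \sum_(1 <= t < T.+1) D t ^+ 2 * expR (theta * D t)
    <= expR (c * a) * (a ^+ 2 * M).
  apply: le_trans (_ : \sum_(1 <= t < T.+1) D t ^+ 2 * expR (c * a) <= _).
    apply: ler_sum_nat => t /andP[t1 _]; rewrite ler_wpM2l ?sqr_ge0 // ler_expR.
    rewrite /theta -/sM mulrAC ler_pdivrMr ?(lt_le_trans _ sM_ge2) //.
    have := D_le t t1; have := D_ge0 t; have := mulr_gt0 c_gt0 a_gt0; nra.
  rewrite -mulr_suml mulrC ler_wpM2l ?expR_ge0 // sum_sqr_le_budget //.
  by rewrite ger0_norm // D_le.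
move=> regret; rewrite -(ler_pM2l theta_gt0); apply: le_trans regret _.
have -> : theta * (sM * (`|alpha| / c * 2 ^+ j + c * expR (c * a) * a ^+ 2)) =
    `|alpha| * 2 ^+ j + theta ^+ 2 * (expR (c * a) * (a ^+ 2 * M)).
  by rewrite /theta -/sM -sM2; field; rewrite !gt_eqF //; lra.
by rewrite lerD2l ler_wpM2l ?sqr_ge0.
Qed.

End ExponentialWeights.

Section DyadicGrid.
Variable R : realType.

Lemma sqrt_lt_exp2_Emax T : (1 <= T)%N ->
  Num.sqrt ((2 * T - 1)%:R : R) < 2 ^+ (Emax R T).+1.
Proof.
move=> T_ge1.
have s_gt0 : 0 < Num.sqrt ((2 * T - 1)%:R : R) by rewrite sqrtr_gt0 ltr0n; lia.
have ln2_gt0 : 0 < ln (2 : R) by rewrite ln_gt0 // ltr1n.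
have -> : (2 : R) ^+ (Emax R T).+1 = expR ((Emax R T).+1%:R * ln 2).
  by rewrite expRM_natl lnK // posrE.
by rewrite -(lnK s_gt0) ltr_expR -ltr_pdivrMr // /Emax; exact: truncnS_gt.
Qed.

Lemma dyadic_bracket (s : R) n : 1 <= s -> s < 2 ^+ n.+1 ->
  exists j : 'I_n.+1, 2 ^+ j <= s < 2 ^+ j.+1.
Proof.
move=> s_ge1; elim: n => [|n IH] s_lt; first by exists ord0; rewrite expr0 s_ge1.
have [s_lt'|s_ge] := ltP s (2 ^+ n.+1); last by exists ord_max; rewrite s_ge.
by have [j js] := IH s_lt'; exists (widen_ord (leqnSn _) j).
Qed.

Lemma sqrt_path_scale_le (rho P M : R) : 0 < rho -> 0 <= P -> 0 <= M ->
  Num.sqrt (1 + 2 * P / rho) * Num.sqrt M <= Num.sqrt (1 + 2 / rho) * Num.sqrt ((1 + P) * M).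
Proof.
move=> rho_gt0 P_ge0 M_ge0.
have P_rho : 0 <= P / rho by rewrite divr_ge0 // ltW.
have rho_inv : 0 <= 2 / rho by rewrite divr_ge0 // ltW.
have lhs_ge0 : 0 <= 1 + 2 * P / rho by rewrite -mulrA addr_ge0 // mulr_ge0.
have rhs_ge0 : 0 <= 1 + 2 / rho by rewrite addr_ge0.
rewrite -(sqrtrM _ lhs_ge0) -(sqrtrM _ rhs_ge0) ler_sqrt; last first.
  by rewrite mulr_ge0 // mulr_ge0 // addr_ge0.
by rewrite mulrA ler_wpM2r // mulrAC; nra.
Qed.

(* Playing the dyadic step p in [s/2, s] instead of the unknown optimum s costs a
   factor at most 3/2 in the expert term. *)
Lemma dyadic_tuning_le (A B a p s : R) : 0 <= A -> 0 <= B -> 0 <= a ->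
  0 < p -> p <= s -> s < 2 * p -> 1 <= s ->
  A * p + B + a / 2 * (p + s ^+ 2 / p) <= s * (A + B + 2 * a).
Proof.
move=> A_ge0 B_ge0 a_ge0 p_gt0 p_le s_lt s_ge1.
have : s ^+ 2 / p <= 2 * s by rewrite ler_pdivrMr //; nra.
have : A * p <= A * s by rewrite ler_wpM2l.
nra.
Qed.

Lemma exists_dyadic_scale (rho P : R) T : 0 < rho -> 0 <= P -> P <= rho * (T.-1)%:R ->
  (1 <= T)%N ->
  exists j : 'I_(Emax R T).+1, 2 ^+ j <= Num.sqrt (1 + 2 * P / rho) < 2 * 2 ^+ j.
Proof.
move=> rho_gt0 P_ge0 P_le T_ge1.
have two_P_rho : 0 <= 2 * P / rho by rewrite -mulrA mulr_ge0 // divr_ge0 // ltW.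
have s_ge1 : 1 <= Num.sqrt (1 + 2 * P / rho).
  by rewrite -[X in X <= _]sqrtr1 ler_sqrt ?lerDl // addr_ge0.
have s_lt : Num.sqrt (1 + 2 * P / rho) < 2 ^+ (Emax R T).+1.
  apply: le_lt_trans (sqrt_lt_exp2_Emax T_ge1).
  rewrite ler_sqrt ?ler0n // (_ : (2 * T - 1 = (2 * T.-1).+1)%N); last by lia.
  have : 2 * P / rho <= 2 * (T.-1)%:R by rewrite ler_pdivrMr //; nra.
  by move=> ?; rewrite -[X in _ <= X]natr1 natrM; lra.
by have [j] := dyadic_bracket s_ge1 s_lt; rewrite exprS; exists j.
Qed.

Lemma tuned_regret_sum_le (rho a A B M P p MS ES : R) :
  0 < rho -> 0 <= a -> 0 <= A -> 0 <= B -> 0 <= P -> 0 < M -> 0 < p ->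
  p <= Num.sqrt (1 + 2 * P / rho) < 2 * p ->
  MS <= Num.sqrt M * (A * p + B) ->
  ES <= a * Num.sqrt M / 2 * (p + (1 + 2 * P / rho) / p) ->
  MS + ES <= Num.sqrt (1 + 2 / rho) * (A + B + 2 * a) * Num.sqrt ((1 + P) * M).
Proof.
move=> rho_gt0 a_ge0 A_ge0 B_ge0 P_ge0 M_gt0 p_gt0 /andP[p_le s_lt] MS_le ES_le.
set s := Num.sqrt (1 + 2 * P / rho) in p_le s_lt *.
have two_P_rho : 0 <= 2 * P / rho by rewrite -mulrA mulr_ge0 // divr_ge0 // ltW.
have s_ge1 : 1 <= s by rewrite -[X in X <= _]sqrtr1 ler_sqrt ?lerDl // addr_ge0.
have s2 : s ^+ 2 = 1 + 2 * P / rho by rewrite sqr_sqrtr // addr_ge0.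
rewrite -s2 in ES_le.
set K := A + B + 2 * a.
have K_ge0 : 0 <= K by rewrite !addr_ge0 // mulr_ge0.
apply: le_trans (_ : Num.sqrt M * (s * K) <= _).
  apply: le_trans (lerD MS_le ES_le) _.
  have -> : Num.sqrt M * (A * p + B) + a * Num.sqrt M / 2 * (p + s ^+ 2 / p) =
    Num.sqrt M * (A * p + B + a / 2 * (p + s ^+ 2 / p)) by ring.
  by rewrite ler_wpM2l ?sqrtr_ge0 // dyadic_tuning_le.
have -> : Num.sqrt M * (s * K) = s * Num.sqrt M * K by ring.
by rewrite (mulrAC _ K) ler_wpM2r // sqrt_path_scale_le // ltW.
Qed.

End DyadicGrid.

Unset Implicit Arguments.
Set Strict Implicit.

Theorem theorem1 (R : realType) (rho vrho alpha c : R) :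
  0 < rho -> 0 < vrho -> 0 < c -> (zeta_series alpha <= 2%:E)%E ->
  exists K : R,
  forall (V : lmodType R) (ip : V -> V -> R) (C : set V)
    (phi : nat -> V -> \bar R) (T : nat) (M : R)
    (x xt xs xh : 'I_(Emax R T).+1 -> nat -> V)
    (g : nat -> V) (l lh wt w : nat -> 'I_(Emax R T).+1 -> R),
  hilbert ip -> (exists x0, C x0) -> closed_set ip C -> is_convex_set C ->
  is_diameter ip C rho ->
  (forall t, proper_convex (phi t)) ->
  (forall t y, C y -> in_dom_subdiff ip (phi t) y) ->
  (forall t y gy, C y -> subgrad ip (phi t) y gy -> ipnorm ip gy <= vrho) ->
  (1 <= T)%N -> 0 < M ->
  let eta (i : 'I_(Emax R T).+1) : R := rho / (vrho * Num.sqrt M) * 2 ^+ i in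
  (forall i, C (xt i 1%N)) ->
  (forall i t, (1 <= t)%N -> is_proj ip C (xt i t - eta i *: xh i t) (x i t)) ->
  (forall i t, (1 <= t)%N -> is_proj ip C (xt i t - eta i *: xs i t) (xt i t.+1)) ->
  (forall i t, (1 <= t)%N -> subgrad ip (phi t) (x i t) (xs i t)) ->
  (forall i t, (1 <= t)%N -> ipnorm ip (xh i t) <= vrho) ->
  let theta : R := c / Num.sqrt M in
  let xbar (t : nat) : V := \sum_(i < (Emax R T).+1) w t i *: x i t in
  (forall i : 'I_(Emax R T).+1,
     wt 1%N i = ((i.+2)%:R `^ (- alpha)) / \sum_(j < (Emax R T).+1) ((j.+2)%:R `^ (- alpha))) ->
  (forall t, (1 <= t)%N -> wt t.+1 = normalize (fun i => wt t i * expR (- theta * l t i))) ->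
  (forall t, (1 <= t)%N -> w t = normalize (fun i => wt t i * expR (- theta * lh t i))) ->
  (forall t, (1 <= t)%N -> subgrad ip (phi t) (xbar t) (g t)) ->
  (forall t i, (1 <= t)%N -> l t i = ip (g t) (x i t)) ->
  (forall t, (1 <= t)%N -> supnorm (l t) <= rho * vrho) ->
  (forall t, (1 <= t)%N -> supnorm (lh t) <= rho * vrho) ->
  let Q (j : 'I_(Emax R T).+1) : R :=
    4 + vrho ^- 2 * \sum_(1 <= t < T) ipnorm ip (xs j t - xh j t) ^+ 2 in
  let L : R :=
    4 + rho ^- 2 * vrho ^- 2 * \sum_(1 <= t < T) supnorm (fun i => l t i - lh t i) ^+ 2 in
  Num.max L (\big[Num.max/0]_(j < (Emax R T).+1) Q j) <= M ->
  forall z : nat -> V, (forall t, (1 <= t <= T)%N -> C (z t)) ->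
  let P : R := \sum_(2 <= t < T.+1) ipnorm ip (z t - z t.-1) in
  \sum_(1 <= t < T.+1) (fine (phi t (xbar t)) - fine (phi t (z t)))
    <= K * Num.sqrt ((1 + P) * M).
Proof.
move=> rho_gt0 vrho_gt0 c_gt0 zeta_le2.
set a := rho * vrho.
exists (Num.sqrt (1 + 2 / rho) * (`|alpha| / c + c * expR (c * a) * a ^+ 2 + 2 * a)).
move=> V ip C phi T M x xt xs xh g l lh wt w [ip_inner _] _ _ C_convex [C_diam _] _
  dom_subdiff subgrad_le T_ge1 M_gt0 eta xt1 play_proj next_proj xs_subgrad xh_le
  theta xbar wt1 wt_next w_play g_subgrad lE l_le lh_le Q L.
rewrite ge_max => /andP[L_le /bigmax_leP[_ Q_le]] z zC.
cbv zeta; set P := \sum_(2 <= t < T.+1) _.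
have a_gt0 : 0 < a by rewrite mulr_gt0.
have P_ge0 : 0 <= P by apply: sumr_ge0 => t _; exact: ipnorm_ge0.
have [j scale_j] := exists_dyadic_scale rho_gt0 P_ge0 (path_length_le C_diam zC) T_ge1.
have meta_budget : 4 + a ^- 2 *
    \sum_(1 <= t < T) supnorm (fun i => l t i - lh t i) ^+ 2 <= M.
  by rewrite /a exprMn invfM.
have meta := ones_tuned_regret j zeta_le2 c_gt0 a_gt0 T_ge1 wt1 wt_next w_play l_le lh_le
  meta_budget.
have p_gt0 : 0 < (2 : R) ^+ j by rewrite exprn_gt0.
have expert := ogp_tuned_regret ip_inner C_convex C_diam rho_gt0 vrho_gt0 p_gt0 T_ge1
  (play_proj j) (next_proj j) (xt1 j) zC
  (subgrad_le _ _ _ (proj1 (play_proj j T T_ge1)) (xs_subgrad j T T_ge1))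
  (xh_le j T T_ge1) (Q_le j isT).
have B_ge0 : 0 <= c * expR (c * a) * a ^+ 2 by rewrite !mulr_ge0 ?expR_ge0 ?sqr_ge0 // ltW.
apply: le_trans (tuned_regret_sum_le rho_gt0 (ltW a_gt0) (divr_ge0 (normr_ge0 _) (ltW c_gt0))
  B_ge0 P_ge0 M_gt0 p_gt0 scale_j meta expert).
rewrite -big_split; apply: ler_sum_nat => t /andP[t1 tT].
have [gz [fz _]] := dom_subdiff t (z t) (zC t (introT andP (conj t1 tT))).
rewrite lE //; under eq_bigr do rewrite lE //.
exact: mixture_regret_split (g_subgrad t t1) (xs_subgrad j t t1) fz.
Qed.
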